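(* For every integer $m\geq 3$, there exists a set of $m$ points in $\mathbb{R}^{m-1}$ that is in crescent configuration.
   Context: A set of points in $\mathbb{R}^d$ is in general position if no $d+1$ of the points lie on a common (affine) hyperplane of $\mathbb{R}^d$ and no $d+2$ of the points lie on a common hypersphere of $\mathbb{R}^d$. A set of $n$ points in $\mathbb{R}^d$ is in crescent configuration if the points are in general position in $\mathbb{R}^d$, the Euclidean distances between the $\binom{n}{2}$ pairs of distinct points take exactly $n-1$ distinct values, and for every $1\le i\le n-1$ there is one of these distance values that is attained by exactly $i$ pairs of points. *)

(* real Euclidean space R^d, points as functions nat -> R
   where only coordinates 0..d-1 are used. *)
From Stdlib Require Import Reals List Arith Lia.
Import ListNotations.
Open Scope R_scope.

Definition sumR (d : nat) (f : nat -> R) : R :=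
  fold_right Rplus 0 (map f (seq 0 d)).

Definition edist (d : nat) (x y : nat -> R) : R :=
  sqrt (sumR d (fun k => (x k - y k) ^ 2)).

Definition distinct_points (d n : nat) (P : nat -> nat -> R) : Prop :=
  forall i j, (i < n)%nat -> (j < n)%nat -> i <> j ->
    exists k, (k < d)%nat /\ P i k <> P j k.

Definition index_subset (n : nat) (S : list nat) : Prop :=
  NoDup S /\ forall i, In i S -> (i < n)%nat.

Definition on_common_hyperplane (d : nat) (P : nat -> nat -> R) (S : list nat) : Prop :=
  exists (a : nat -> R) (b : R),
    (exists k, (k < d)%nat /\ a k <> 0) /\
    forall i, In i S -> sumR d (fun k => a k * P i k) = b.

Definition on_common_hypersphere (d : nat) (P : nat -> nat -> R) (S : list nat) : Prop :=
  exists (c : nat -> R) (r : R),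
    0 < r /\ forall i, In i S -> edist d (P i) c = r.

Definition general_position (d n : nat) (P : nat -> nat -> R) : Prop :=
  (forall S, index_subset n S -> length S = (d + 1)%nat ->
     ~ on_common_hyperplane d P S) /\
  (forall S, index_subset n S -> length S = (d + 2)%nat ->
     ~ on_common_hypersphere d P S).

Definition index_pairs (n : nat) : list (nat * nat) :=
  flat_map (fun j => map (fun i => (i, j)) (seq 0 j)) (seq 0 n).

Definition dist_mult (d n : nat) (P : nat -> nat -> R) (v : R) : nat :=
  length (filter (fun p => if Req_EM_T (edist d (P (fst p)) (P (snd p))) v
                           then true else false) (index_pairs n)).

Definition distance_values (d n : nat) (P : nat -> nat -> R) (L : list R) : Prop :=
  NoDup L /\
  (forall v, In v L <->
     exists i j, (i < j)%nat /\ (j < n)%nat /\ edist d (P i) (P j) = v).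

Definition crescent_configuration (d n : nat) (P : nat -> nat -> R) : Prop :=
  distinct_points d n P /\
  general_position d n P /\
  exists L : list R,
    distance_values d n P L /\
    length L = (n - 1)%nat /\
    forall i, (1 <= i <= n - 1)%nat ->
      exists v, In v L /\ dist_mult d n P v = i.

(* The points are p_0 = 0 and, for j >= 1, p_j = c_0 e_0 + ... + c_(j-2) e_(j-2) + e_(j-1).
   The coefficients c_k are chosen so that every p_j is equidistant from all earlier
   points, at distance sqrt (1 + c_0^2 + ... + c_(j-2)^2); these distances strictly
   increase with j, so p_j accounts for exactly j pairs at the j-th distance value.
   The coordinates of p_1, ..., p_(m-1) form a unitriangular matrix, so the m points
   are affinely independent, which in dimension m - 1 is all of general position
   (no m + 1 of them exist to lie on a sphere). *)

From Stdlib Require Import Reals List Arith Lia.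
From Stdlib Require Import Lra FinFun.
Open Scope R_scope.

Lemma fold_right_Rplus_init (l : list R) (x : R) :
  fold_right Rplus x l = fold_right Rplus 0 l + x.
Proof.
  induction l as [|a l IH]; simpl; [lra|].
  rewrite IH; lra.
Qed.

Lemma sumR_S (n : nat) (f : nat -> R) : sumR (S n) f = sumR n f + f n.
Proof.
  unfold sumR.
  rewrite seq_S, map_app, fold_right_app; simpl.
  rewrite fold_right_Rplus_init; lra.
Qed.

Lemma sumR_eq0 (d : nat) (f : nat -> R) :
  (forall k, (k < d)%nat -> f k = 0) -> sumR d f = 0.
Proof.
  induction d as [|d IH]; intro Hf; [reflexivity|].
  rewrite sumR_S, IH, Hf; [lra|lia|].
  intros; apply Hf; lia.
Qed.

Lemma sumR_single (d : nat) (f : nat -> R) (k : nat) : (k < d)%nat ->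
  (forall k', (k' < d)%nat -> k' <> k -> f k' = 0) -> sumR d f = f k.
Proof.
  revert f k; induction d as [|d IH]; intros f k Hk Hf; [lia|].
  rewrite sumR_S.
  destruct (Nat.eq_dec k d) as [->|Hne].
  - rewrite sumR_eq0; [lra|]. intros; apply Hf; lia.
  - rewrite (IH f k), (Hf d); [lra|lia|lia|lia|].
    intros; apply Hf; lia.
Qed.

Lemma index_subset_length (n : nat) (l : list nat) :
  index_subset n l -> (length l <= n)%nat.
Proof.
  intros [HND Hlt].
  rewrite <- (length_seq n 0).
  apply NoDup_incl_length; [exact HND|].
  intros x Hx; apply in_seq; specialize (Hlt x Hx); lia.
Qed.

Lemma index_subset_full (n : nat) (l : list nat) :
  index_subset n l -> length l = n -> forall i, (i < n)%nat -> In i l.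
Proof.
  intros [HND Hlt] Hlen i Hi.
  apply (NoDup_length_incl (l' := seq 0 n) HND); [rewrite length_seq; lia| |apply in_seq; lia].
  intros x Hx; apply in_seq; specialize (Hlt x Hx); lia.
Qed.

(* [dsq k = c_0^2 + ... + c_(k-1)^2], with [c_k = coef k]. *)
Fixpoint dsq (n : nat) : R :=
  match n with
  | O => 0
  | S n' => dsq n' + ((1 - dsq n') / 2) ^ 2
  end.

Definition coef (k : nat) : R := (1 - dsq k) / 2.

Definition crescent_point (i k : nat) : R :=
  if Nat.ltb (S k) i then coef k
  else if Nat.eqb (S k) i then 1 else 0.

Definition crescent_radius (j : nat) : R := sqrt (dsq j + 1).

Lemma dsq_S (n : nat) : dsq (S n) = dsq n + coef n ^ 2.
Proof. reflexivity. Qed.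

(* [coef k] solves this equation, which says exactly that every later point is as
   far from p_(k+1) as from p_0. *)
Lemma coef_equidistant (k : nat) : (1 - coef k) ^ 2 = dsq (S k).
Proof. rewrite dsq_S; unfold coef; field. Qed.

Lemma dsq_bounds (n : nat) : 0 <= dsq n < 1.
Proof.
  induction n as [|n IH]; simpl; [lra|].
  destruct IH; split; nra.
Qed.

Lemma dsq_lt_S (n : nat) : dsq n < dsq (S n).
Proof. simpl; destruct (dsq_bounds n); nra. Qed.

Lemma dsq_lt (a b : nat) : (a < b)%nat -> dsq a < dsq b.
Proof.
  induction 1 as [|b _ IH]; [apply dsq_lt_S|].
  pose proof (dsq_lt_S b); lra.
Qed.

Lemma crescent_radius_inj : Injective crescent_radius.
Proof.
  intros a b H; unfold crescent_radius in H.
  destruct (dsq_bounds a), (dsq_bounds b).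
  apply sqrt_inj in H; [|lra|lra].
  destruct (Nat.lt_trichotomy a b) as [h|[h|h]]; auto;
    apply dsq_lt in h; lra.
Qed.

Lemma sqdist_prefix (a b n : nat) : (a < b)%nat ->
  sumR n (fun k => (crescent_point a k - crescent_point b k) ^ 2) =
  if Nat.ltb n a then 0 else if Nat.ltb n b then dsq n else dsq (b - 1) + 1.
Proof.
  intro Hab; induction n as [|n IH].
  - unfold sumR; simpl.
    destruct (Nat.ltb_spec 0 a); [reflexivity|].
    destruct (Nat.ltb_spec 0 b); [reflexivity|lia].
  - rewrite sumR_S, IH; unfold crescent_point.
    pose proof (coef_equidistant n); pose proof (dsq_S n).
    destruct (Nat.ltb_spec n a), (Nat.ltb_spec (S n) a),
      (Nat.ltb_spec n b), (Nat.ltb_spec (S n) b),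
      (Nat.eqb_spec (S n) a), (Nat.eqb_spec (S n) b);
      try lia; cbv beta iota;
      try (replace (b - 1)%nat with n by lia);
      lra.
Qed.

Lemma edist_crescent_point (d a b : nat) : (a < b)%nat -> (b <= d)%nat ->
  edist d (crescent_point a) (crescent_point b) = crescent_radius (b - 1).
Proof.
  intros Hab Hbd; unfold edist.
  rewrite sqdist_prefix by lia.
  destruct (Nat.ltb_spec d a), (Nat.ltb_spec d b); [lia|lia|lia|reflexivity].
Qed.

Lemma crescent_points_distinct (d : nat) :
  distinct_points d (S d) crescent_point.
Proof.
  assert (Hdiff : forall i j, (i < j <= d)%nat ->
            crescent_point i (j - 1) <> crescent_point j (j - 1)).
  { intros i j Hij; unfold crescent_point.
    destruct (Nat.ltb_spec (S (j - 1)) i), (Nat.eqb_spec (S (j - 1)) i),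
      (Nat.ltb_spec (S (j - 1)) j), (Nat.eqb_spec (S (j - 1)) j);
      try lia; lra. }
  intros i j Hi Hj Hij.
  destruct (Nat.lt_trichotomy i j) as [h|[h|h]]; [|lia|].
  - exists (j - 1)%nat; split; [lia|]. apply Hdiff; lia.
  - exists (i - 1)%nat; split; [lia|]. intro E; symmetry in E; revert E.
    apply Hdiff; lia.
Qed.

(* The hyperplane equation at p_0 = 0 gives b = 0, and at p_(k+1) it reads
   a_k + sum_(k'<k) c_k' a_k' = 0. *)
Lemma crescent_affinely_independent (d : nat) (a : nat -> R) (b : R) :
  (forall i, (i <= d)%nat -> sumR d (fun k => a k * crescent_point i k) = b) ->
  forall k, (k < d)%nat -> a k = 0.
Proof.
  intro Hpl.
  assert (Hb : b = 0).
  { rewrite <- (Hpl 0%nat) by lia.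
    apply sumR_eq0; intros k _; unfold crescent_point; simpl; lra. }
  intro k; induction k as [k IHk] using (well_founded_induction lt_wf); intro Hk.
  specialize (Hpl (S k) ltac:(lia)).
  rewrite (sumR_single _ _ k) in Hpl; [|lia|].
  - unfold crescent_point in Hpl; rewrite Nat.ltb_irrefl, Nat.eqb_refl in Hpl; lra.
  - intros k' Hk' Hne.
    destruct (Nat.lt_trichotomy k' k) as [h|[h|h]]; [|lia|].
    + rewrite IHk by lia; lra.
    + unfold crescent_point.
      destruct (Nat.ltb_spec (S k') (S k)), (Nat.eqb_spec (S k') (S k));
        try lia; lra.
Qed.

Lemma crescent_general_position (d : nat) :
  general_position d (S d) crescent_point.
Proof.
  split.
  - intros Sl HS Hlen [a [b [[k [Hk Hak]] Hpl]]].
    apply Hak, (crescent_affinely_independent d a b); [|exact Hk].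
    intros i Hi; apply Hpl, (index_subset_full (S d)); [exact HS|lia|lia].
  - intros Sl HS Hlen _.
    apply index_subset_length in HS; lia.
Qed.

Lemma crescent_distance_values (d : nat) :
  distance_values d (S d) crescent_point (map crescent_radius (seq 0 d)).
Proof.
  split.
  - apply Injective_map_NoDup; [apply crescent_radius_inj|apply seq_NoDup].
  - intro v; rewrite in_map_iff; split.
    + intros [j [<- Hj]]; apply in_seq in Hj.
      exists 0%nat, (S j); repeat split; try lia.
      rewrite edist_crescent_point by lia; f_equal; lia.
    + intros [i [j [Hij [Hj <-]]]].
      exists (j - 1)%nat; rewrite edist_crescent_point by lia.
      split; [reflexivity|apply in_seq; lia].
Qed.

Lemma index_pairs_S (n : nat) :
  index_pairs (S n) = index_pairs n ++ map (fun i => (i, n)) (seq 0 n).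
Proof.
  unfold index_pairs; rewrite seq_S, flat_map_app; simpl.
  rewrite app_nil_r; reflexivity.
Qed.

Lemma length_filter_const {A : Type} (f : A -> bool) (b : bool) (l : list A) :
  (forall x, In x l -> f x = b) ->
  length (filter f l) = if b then length l else 0%nat.
Proof.
  induction l as [|x l IH]; intro Hf; [now destruct b|]; simpl.
  rewrite Hf by (left; reflexivity).
  destruct b; simpl; rewrite IH by (intros; apply Hf; right; assumption); reflexivity.
Qed.

(* The pairs (i, n) added with the n-th point all have distance [crescent_radius (n-1)]. *)
Lemma dist_mult_crescent (d j n : nat) : (1 <= j)%nat -> (n <= S d)%nat ->
  dist_mult d n crescent_point (crescent_radius (j - 1)) =
  if Nat.ltb j n then j else 0%nat.
Proof.
  intros Hj; induction n as [|n IH]; intro Hn; [reflexivity|].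
  unfold dist_mult in *.
  rewrite index_pairs_S, filter_app, length_app, IH by lia.
  set (p := fun q : nat * nat =>
    if Req_EM_T (edist d (crescent_point (fst q)) (crescent_point (snd q)))
                (crescent_radius (j - 1)) then true else false).
  assert (Hp : forall i, (i < n)%nat -> p (i, n) = Nat.eqb n j).
  { intros i Hi; unfold p; simpl.
    rewrite edist_crescent_point by lia.
    destruct (Req_dec_T _ _) as [e|ne], (Nat.eqb_spec n j); auto.
    apply crescent_radius_inj in e; lia. }
  rewrite (length_filter_const _ (Nat.eqb n j)), length_map, length_seq.
  - destruct (Nat.eqb_spec n j), (Nat.ltb_spec j n), (Nat.ltb_spec j (S n)); lia.
  - intros q Hq; apply in_map_iff in Hq; destruct Hq as [i [<- Hi]].
    apply in_seq in Hi; apply Hp; lia.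
Qed.

Theorem mainTheorem2 :
  forall m : nat, (3 <= m)%nat ->
    exists P : nat -> nat -> R, crescent_configuration (m - 1) m P.
Proof.
  intros [|d] Hd; [lia|].
  rewrite Nat.sub_succ, Nat.sub_0_r.
  exists crescent_point.
  split; [apply crescent_points_distinct|].
  split; [apply crescent_general_position|].
  exists (map crescent_radius (seq 0 d)).
  split; [apply crescent_distance_values|].
  split; [rewrite length_map, length_seq; lia|].
  intros j Hj; exists (crescent_radius (j - 1)); split.
  - apply in_map_iff; exists (j - 1)%nat; split; [reflexivity|apply in_seq; lia].
  - rewrite dist_mult_crescent by lia.
    destruct (Nat.ltb_spec j (S d)); lia.
Qed.
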